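(* Let $K\ge 2$, let $L_1,\dots,L_K:\mathbb{R}^d\to\mathbb{R}$ be twice differentiable, and let $\mu>0$, $\rho,\delta\ge 0$. Assume every $L_k$ is $\mu$-smooth and $\rho$-Hessian Lipschitz. Let $\widehat{w}_1,\dots,\widehat{w}_{K-1}\in\mathbb{R}^d$ and let $H_1,\dots,H_{K-1}$ be symmetric $d\times d$ matrices with $\|H_k\|_2\le\mu$ and $\|H_k-\nabla^2L_k(\widehat{w}_k)\|_2\le\delta$ for all $k\in[K-1]$. Define \[ \widetilde{L}_{K-1}(w)=\sum_{k=1}^{K-1}\Big(L_k(\widehat{w}_k)+(w-\widehat{w}_k)^\top\nabla L_k(\widehat{w}_k)+\tfrac12(w-\widehat{w}_k)^\top H_k(w-\widehat{w}_k)\Big), \] $\widetilde{F}(w)=\frac1K\big(\widetilde{L}_{K-1}(w)+L_K(w)\big)$ and $F(w)=\frac1K\sum_{k=1}^K L_k(w)$. Let $\mathcal{W}\subseteq\mathbb{R}^d$, and suppose $F^*:=\min_{w\in\mathcal{W}}F(w)$ and $\widetilde{F}^*:=\min_{w\in\mathcal{W}}\widetilde{F}(w)$ exist. Let $w_0=\widehat{w}_{K-1}$ and run $T$ iterations of $w_t=w_{t-1}-\eta\nabla\widetilde{F}(w_{t-1})$ with $\eta=1/\mu$, the iterates lying in $\mathcal{W}$. Put $F_0=F(w_0)$, $\widetilde{F}_0=\widetilde{F}(w_0)$. Then \[ \frac1T\sum_{t=1}^T\|\nabla F(w_{t-1})\|_2\le\frac{\alpha}{\sqrt T}+\beta+\gamma_1\sqrt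 T+\gamma_2 T, \] where $\alpha=\sqrt{2\mu(F_0-F^* )}$, $\beta=\frac{\sqrt3}{K}\sum_{k=1}^{K-2}\big(\delta\|w_0-\widehat{w}_k\|_2+2\rho\|w_0-\widehat{w}_k\|_2^2\big)$, $\gamma_1=\delta\sqrt{\frac3\mu(\widetilde{F}_0-\widetilde{F}^* )}$, and $\gamma_2=\frac{4\rho}{\mu}(\widetilde{F}_0-\widetilde{F}^* )$.
   Context: $\|\cdot\|_2$ denotes the Euclidean norm for vectors and the operator norm for matrices; $[N]=\{1,\dots,N\}$. A differentiable $f$ is $\mu$-smooth if $\|\nabla f(w)-\nabla f(w')\|_2\le\mu\|w-w'\|_2$ for all $w,w'$, and $\rho$-Hessian Lipschitz if $\|\nabla^2 f(w)-\nabla^2 f(w')\|_2\le\rho\|w-w'\|_2$ for all $w,w'$. No convexity is assumed. *)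

From HB Require Import structures.
From mathcomp Require Import all_boot all_order all_algebra.
From mathcomp Require Import all_classical all_reals all_analysis.
Set Implicit Arguments. Unset Strict Implicit. Unset Printing Implicit Defensive.
Import Order.TTheory GRing.Theory Num.Theory.
Import numFieldNormedType.Exports.
Local Open Scope ring_scope.
Local Open Scope classical_set_scope.

Section Defs.
Variable (R : realType) (d : nat).

Definition enorm (v : 'cV[R]_d) : R := Num.sqrt (\sum_i (v i 0) ^+ 2).

Definition opnorm (A : 'M[R]_d) : R :=
  sup [set enorm (A *m x) | x in [set x : 'cV[R]_d | enorm x <= 1]].

Definition ebasis (i : 'I_d) : 'cV[R]_d := delta_mx i 0.

Definition dotv (u v : 'cV[R]_d) : R := (u^T *m v) 0 0.

Definition grad (f : 'cV[R]_d -> R) (w : 'cV[R]_d) : 'cV[R]_d :=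
  \col_i ('D_(ebasis i) f w).

Definition hess (f : 'cV[R]_d -> R) (w : 'cV[R]_d) : 'M[R]_d :=
  \matrix_(i, j) ('D_(ebasis j) (fun u => grad f u i 0) w).

Definition twice_differentiable (f : 'cV[R]_d -> R) : Prop :=
  (forall w, differentiable f w) /\ (forall w, differentiable (grad f) w).

Definition smooth_const (mu : R) (f : 'cV[R]_d -> R) : Prop :=
  forall w w', enorm (grad f w - grad f w') <= mu * enorm (w - w').

Definition hess_lipschitz (rho : R) (f : 'cV[R]_d -> R) : Prop :=
  forall w w', opnorm (hess f w - hess f w') <= rho * enorm (w - w').

End Defs.

From HB Require Import structures.
From mathcomp Require Import all_boot all_order all_algebra.
From mathcomp Require Import all_classical all_reals all_analysis.
From mathcomp Require Import ring lra.
Import Order.TTheory GRing.Theory Num.Theory.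
Import numFieldNormedType.Exports.
Set Implicit Arguments. Unset Strict Implicit. Unset Printing Implicit Defensive.
Local Open Scope ring_scope.
Local Open Scope classical_set_scope.

(* Gradient descent on the surrogate [Ft] with step [1/mu] decreases [Ft] by at
   least [|grad Ft|^2 / (2 mu)] per step (descent lemma), so the squared gradients
   sum to at most [2 mu (Ft0 - Ftstar)] and, by Cauchy-Schwarz, every iterate stays
   within [sqrt (2 T (Ft0 - Ftstar) / mu)] of [w 0].  Read as an inexact gradient
   step on [F], the same step decreases [F] by [(|grad F|^2 - |grad Ft - grad F|^2)
   / (2 mu)].  The gradient error is an average of residuals of the quadratic
   models, each bounded by [delta |w - what k| + rho/2 |w - what k|^2] (Hessian
   error plus the Hessian-Lipschitz Taylor bound); the last model is centred at
   [w 0], so it only sees the drift.  Summing over [t] and applying Cauchy-Schwarz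
   once more gives the bound. *)

Section Euclid.
Variables (R : realType) (d : nat).
Implicit Types (u v x : 'cV[R]_d) (A : 'M[R]_d).

Lemma dotvE u v : dotv u v = \sum_i u i 0 * v i 0.
Proof. by rewrite /dotv !mxE; apply: eq_bigr => i _; rewrite mxE. Qed.

Lemma dotvC u v : dotv u v = dotv v u.
Proof. by rewrite !dotvE; apply: eq_bigr => i _; rewrite mulrC. Qed.

Lemma dotvDl u v x : dotv (u + v) x = dotv u x + dotv v x.
Proof. by rewrite /dotv linearD mulmxDl mxE. Qed.

Lemma dotvDr u v x : dotv x (u + v) = dotv x u + dotv x v.
Proof. by rewrite /dotv mulmxDr mxE. Qed.

Lemma dotvZl (c : R) u v : dotv (c *: u) v = c * dotv u v.
Proof. by rewrite /dotv linearZ -scalemxAl mxE. Qed.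

Lemma dotvZr (c : R) u v : dotv u (c *: v) = c * dotv u v.
Proof. by rewrite /dotv -scalemxAr mxE. Qed.

Lemma dotvNl u v : dotv (- u) v = - dotv u v.
Proof. by rewrite -scaleN1r dotvZl mulN1r. Qed.

Lemma dotvBl u v x : dotv (u - v) x = dotv u x - dotv v x.
Proof. by rewrite dotvDl dotvNl. Qed.

Lemma dotvBr u v x : dotv x (u - v) = dotv x u - dotv x v.
Proof. by rewrite dotvC dotvBl !(dotvC x). Qed.

Lemma dotv0l v : dotv 0 v = 0.
Proof. by rewrite /dotv linear0 mul0mx mxE. Qed.

Lemma dotv_sumr (I : Type) (r : seq I) (P : pred I) (f : I -> 'cV[R]_d) v :
  dotv v (\sum_(i <- r | P i) f i) = \sum_(i <- r | P i) dotv v (f i).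
Proof. by rewrite /dotv mulmx_sumr summxE. Qed.

Lemma dotv_ebasis i u : dotv (ebasis R i) u = u i 0.
Proof.
rewrite dotvE (bigD1 i) //= big1 ?addr0; first by rewrite mxE !eqxx mul1r.
by move=> j ji; rewrite mxE (negPf ji) mul0r.
Qed.

Lemma dotv_sym_mulmx A u v : A^T = A -> dotv u (A *m v) = dotv v (A *m u).
Proof.
move=> symA; rewrite /dotv.
have -> : (v^T *m (A *m u)) 0 0 = (v^T *m (A *m u))^T 0 0 by rewrite [RHS]mxE.
by rewrite !trmx_mul trmxK symA mulmxA.
Qed.

Lemma ebasis_sum v : v = \sum_i v i 0 *: ebasis R i.
Proof.
apply/matrixP => i j; rewrite (ord1 j) summxE (bigD1 i) //= big1 ?addr0.
  by rewrite !mxE !eqxx mulr1.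
by move=> k ki; rewrite !mxE eq_sym (negPf ki) mulr0.
Qed.

Lemma dotvv_ge0 v : 0 <= dotv v v.
Proof. by rewrite dotvE sumr_ge0 // => i _; rewrite -expr2 sqr_ge0. Qed.

Lemma enormE v : enorm v = Num.sqrt (dotv v v).
Proof. by rewrite /enorm dotvE; under eq_bigr do rewrite expr2. Qed.

Lemma enorm_ge0 v : 0 <= enorm v.
Proof. exact: sqrtr_ge0. Qed.

Lemma enorm_sqr v : enorm v ^+ 2 = dotv v v.
Proof. by rewrite enormE sqr_sqrtr ?dotvv_ge0. Qed.

Lemma enorm_eq0 v : enorm v = 0 -> v = 0.
Proof.
move=> /eqP; rewrite /enorm sqrtr_eq0 => sum_le0.
have /psumr_eq0P v0 : \sum_i v i 0 ^+ 2 = 0.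
  by apply/le_anti; rewrite sum_le0 sumr_ge0 // => i _; rewrite sqr_ge0.
apply/matrixP => i j; rewrite (ord1 j) mxE.
by apply/eqP; rewrite -sqrf_eq0 v0 // => k _; rewrite sqr_ge0.
Qed.

Lemma enorm0 : enorm (0 : 'cV[R]_d) = 0.
Proof. by rewrite enormE dotv0l sqrtr0. Qed.

Lemma enormZ (c : R) v : enorm (c *: v) = `|c| * enorm v.
Proof. by rewrite !enormE dotvZl dotvZr mulrA -expr2 sqrtrM ?sqr_ge0 // sqrtr_sqr. Qed.

Lemma enormN v : enorm (- v) = enorm v.
Proof. by rewrite -scaleN1r enormZ normrN1 mul1r. Qed.

Lemma dotv_le_enorm u v : dotv u v <= enorm u * enorm v.
Proof.
set a := enorm u; set b := enorm v.
have [a0|an0] := eqVneq a 0; first by rewrite (enorm_eq0 a0) dotv0l a0 mul0r.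
have [b0|bn0] := eqVneq b 0.
  by rewrite (enorm_eq0 b0) dotvC dotv0l b0 mulr0.
have ab_gt0 : 0 < a * b by rewrite mulr_gt0 // lt_def ?an0 ?bn0 enorm_ge0.
(* [0 <= |b u - a v|^2 = 2 a b (a b - <u, v>)] *)
have := dotvv_ge0 (b *: u - a *: v).
rewrite !dotvBl !dotvBr !dotvZl !dotvZr -!enorm_sqr -/a -/b (dotvC v u) => h.
by rewrite -(ler_pM2l ab_gt0); nra.
Qed.

Lemma ler_enormD u v : enorm (u + v) <= enorm u + enorm v.
Proof.
rewrite -ler_sqr ?nnegrE ?addr_ge0 ?enorm_ge0 // sqrrD !enorm_sqr.
by rewrite dotvDl !dotvDr (dotvC v u); have := dotv_le_enorm u v; lra.
Qed.

Lemma ler_enorm_sum (I : Type) (r : seq I) (P : pred I) (f : I -> 'cV[R]_d) :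
  enorm (\sum_(i <- r | P i) f i) <= \sum_(i <- r | P i) enorm (f i).
Proof.
elim/big_rec2: _ => [|i a b _ IH]; first by rewrite enorm0.
by apply: le_trans (ler_enormD _ _) _; rewrite lerD2l.
Qed.

Lemma ler_coord_enorm v i : `|v i 0| <= enorm v.
Proof.
rewrite -sqrtr_sqr /enorm ler_wsqrtr // (bigD1 i) //= lerDl.
by rewrite sumr_ge0 // => j _; rewrite sqr_ge0.
Qed.

Lemma enorm_le_l1 v : enorm v <= \sum_i `|v i 0|.
Proof.
rewrite {1}(ebasis_sum v); apply: le_trans (ler_enorm_sum _ _ _) _; apply: ler_sum => i _.
by rewrite enormZ enormE dotv_ebasis mxE !eqxx sqrtr1 mulr1.
Qed.

Lemma enorm_mulmx_le A x : enorm (A *m x) <= opnorm A * enorm x.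
Proof.
set S := [set enorm (A *m y) | y in [set y : 'cV[R]_d | enorm y <= 1]].
have ubS : has_ubound S.
  exists (\sum_i \sum_j `|A i j|) => _ [y /= y_le1 <-].
  apply: le_trans (enorm_le_l1 _) _; apply: ler_sum => i _.
  rewrite mxE; apply: le_trans (ler_norm_sum _ _ _) _.
  apply: ler_sum => j _; rewrite normrM ler_piMr //.
  exact: le_trans (ler_coord_enorm _ _) y_le1.
have [x0|xn0] := eqVneq (enorm x) 0.
  by rewrite (enorm_eq0 x0) mulmx0 !enorm0 mulr0.
have x_gt0 : 0 < enorm x by rewrite lt_def xn0 enorm_ge0.
have /(ub_le_sup ubS) : S (enorm (A *m ((enorm x)^-1 *: x))).
  exists ((enorm x)^-1 *: x) => //=.
  by rewrite enormZ ger0_norm ?invr_ge0 ?enorm_ge0 // mulVf.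
rewrite -/(opnorm A) -scalemxAr enormZ ger0_norm ?invr_ge0 ?enorm_ge0 //.
by rewrite ler_pdivrMl // mulrC.
Qed.

End Euclid.

Section Calculus.
Variable R : realType.

Lemma is_derive_quadratic {V W : normedModType R} (f : V -> W) x v a b :
  (forall h : R, f (x + h *: v) = f x + h *: a + h ^+ 2 *: b) ->
  is_derive x v f a.
Proof.
move=> fE.
have lin_cvg : (fun h : R => a + h *: b) @ 0^' --> a.
  rewrite -[X in _ --> X]addr0 -(scale0r b).
  apply: (@continuous_withinNx _ _ (fun h : R => a + h *: b) 0).1.
  by apply: cvgD; [exact: cvg_cst | apply: cvgZr_tmp; exact: cvg_id].
have quot_cvg :
    (fun h : R => h^-1 *: ((f \o shift x) (h *: v) - f x)) @ 0^' --> a.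
  apply: cvg_trans lin_cvg; apply: near_eq_cvg; near=> h.
  have hn0 : h != 0 by near: h; exact: nbhs_dnbhs_neq.
  rewrite /= [h *: v + x]addrC fE addrAC [f x + _]addrC addrK scalerDr.
  by rewrite !scalerA mulVf // scale1r expr2 mulrA mulVf // mul1r.
split; first by apply/cvg_ex; exists a.
exact: cvg_lim quot_cvg.
Unshelve. all: by end_near. Qed.

Lemma is_derive_line {V W : normedModType R} (g : V -> W) x v (s : R) dg :
  is_derive (x + s *: v) v g dg -> is_derive s 1 (fun s => g (x + s *: v)) dg.
Proof.
have quotE : (fun h : R => h^-1 *: (((fun s => g (x + s *: v)) \o shift s) (h *: 1)
                 - g (x + s *: v))) =
             (fun h : R => h^-1 *: ((g \o shift (x + s *: v)) (h *: v)
                 - g (x + s *: v))).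
  apply/funext => h /=; congr (_ *: (g _ - _)).
  by rewrite [h *: 1]mulr1 scalerDl addrCA addrA.
by case=> dg_ex dgE; split; rewrite /derivable /derive quotE.
Qed.

Lemma is_derive_sum_seq {V W : normedModType R} (I : eqType) (r : seq I)
    (f : I -> V -> W) (df : I -> W) p v :
  (forall i, i \in r -> is_derive p v (f i) (df i)) ->
  is_derive p v (fun u => \sum_(i <- r) f i u) (\sum_(i <- r) df i).
Proof.
move=> f_df; rewrite -fct_sumE big_seq [in X in is_derive _ _ _ X]big_seq.
elim/big_ind2: _ => [|f1 df1 f2 df2|]; [exact: is_derive_cst | | exact: f_df].
exact: is_deriveD.
Qed.

Lemma ler_affine_derive01 (phi dphi : R -> R) (a b : R) :
  (forall s : R, is_derive s (1 : R) phi (dphi s)) ->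
  (forall s, 0 < s < 1 -> dphi s <= a + b * s) ->
  phi 1 <= phi 0 + a + b / 2.
Proof.
move=> dphiE dphi_le.
pose psi s := phi s - (a * s + b / 2 * s ^+ 2).
have dpsiE (s : R) : is_derive s (1 : R) psi (dphi s - (a + b * s)).
  apply: is_deriveB => //; apply: (is_derive_quadratic (b := b / 2)) => h.
  by rewrite [h *: 1]mulr1 /GRing.scale /=; field.
have psi_cont : {within `[0, 1], continuous psi}.
  by apply: derivable_within_continuous => s _; exact: ex_derive.
have [c c01 psiE] := MVT ltr01 (fun s _ => dpsiE s) psi_cont.
have : psi 1 - psi 0 <= 0.
  by rewrite psiE subr0 mulr1 subr_le0 dphi_le // -[_ && _]in_itv.
by rewrite /psi mulr0 mulr1 expr0n expr1n /= mulr0 mulr1; lra.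
Qed.

End Calculus.

Section Gradient.
Variables (R : realType) (d : nat).
Implicit Types (f g : 'cV[R]_d -> R) (G : 'cV[R]_d -> 'cV[R]_d).

Lemma derive_coordE g p v : differentiable g p ->
  'D_v g p = \sum_j v j 0 * 'D_(ebasis R j) g p.
Proof.
move=> dg; rewrite {1}(ebasis_sum v).
by rewrite deriveE // linear_sum; apply: eq_bigr => j _; rewrite linearZ /= deriveE.
Qed.

Lemma is_derive_grad f p v : differentiable f p ->
  is_derive p v f (dotv v (grad f p)).
Proof.
move=> df; split; first exact: diff_derivable.
by rewrite derive_coordE // dotvE; apply: eq_bigr => j _; rewrite mxE.
Qed.

Lemma is_derive_dotv_grad f r p v : differentiable (grad f) p ->
  is_derive p v (fun u => dotv r (grad f u)) (dotv r (hess f p *m v)).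
Proof.
move=> dgrad; under eq_fun do rewrite dotvE; rewrite dotvE.
apply: is_derive_sum_seq => i _; apply: is_deriveZ.
have dgrad_i : differentiable (fun u => grad f u i 0) p.
  have -> : (fun u => grad f u i 0) = (fun M : 'cV[R]_d => M i 0) \o grad f by [].
  by apply: differentiable_comp => //; exact: differentiable_coord.
split; first exact: diff_derivable.
by rewrite derive_coordE // mxE; apply: eq_bigr => j _; rewrite mxE mulrC.
Qed.

Lemma grad_eq_of_is_derive f G :
  (forall p v, is_derive p v f (dotv v (G p))) -> grad f =1 G.
Proof.
move=> fG p; apply/matrixP => i j; rewrite (ord1 j) mxE.
by have fGi := fG p (ebasis R i); rewrite derive_val dotv_ebasis.
Qed.

Lemma descent_lemma f G (mu : R) x y :
  (forall p v, is_derive p v f (dotv v (G p))) ->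
  (forall p q, enorm (G p - G q) <= mu * enorm (p - q)) ->
  f y <= f x + dotv (y - x) (G x) + mu / 2 * enorm (y - x) ^+ 2.
Proof.
move=> fG G_lip; set v := y - x.
have yE : x + 1 *: v = y by rewrite scale1r addrC subrK.
suff : f (x + 1 *: v) <= f (x + 0 *: v) + dotv v (G x) + mu * enorm v ^+ 2 / 2.
  by rewrite yE scale0r addr0 mulrAC.
apply: (ler_affine_derive01 (phi := fun s => f (x + s *: v))
                            (dphi := fun s => dotv v (G (x + s *: v)))).
  by move=> s; apply: is_derive_line; exact: fG.
move=> s /andP[s_gt0 _]; rewrite -lerBlDl -dotvBr.
apply: le_trans (dotv_le_enorm _ _) _.
rewrite mulrAC expr2 mulrA [leRHS]mulrC ler_wpM2l ?enorm_ge0 //.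
apply: le_trans (G_lip _ _) _.
by rewrite addrC addKr enormZ gtr0_norm // mulrA.
Qed.

Lemma taylor_grad_le f (rho : R) x y : 0 <= rho ->
  (forall p, differentiable (grad f) p) -> hess_lipschitz rho f ->
  enorm (grad f y - grad f x - hess f x *m (y - x))
    <= rho / 2 * enorm (y - x) ^+ 2.
Proof.
move=> rho_ge0 dgrad hess_lip; set v := y - x.
set r := grad f y - grad f x - hess f x *m v.
have yE : x + 1 *: v = y by rewrite scale1r addrC subrK.
(* test the residual against itself: [s |-> <r, grad f (x + s v)>] has
   derivative [<r, hess f (x + s v) v>] *)
have : dotv r (grad f (x + 1 *: v)) <= dotv r (grad f (x + 0 *: v))
           + dotv r (hess f x *m v) + rho * enorm v ^+ 2 * enorm r / 2.
  apply: (ler_affine_derive01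
            (phi := fun s => dotv r (grad f (x + s *: v)))
            (dphi := fun s => dotv r (hess f (x + s *: v) *m v))).
    by move=> s; apply: (is_derive_line (g := fun u => dotv r (grad f u)));
       exact: is_derive_dotv_grad.
  move=> s /andP[s_gt0 _]; rewrite -lerBlDl -dotvBr -mulmxBl.
  apply: le_trans (dotv_le_enorm _ _) _.
  rewrite [leRHS](_ : _ = enorm r * (rho * (s * enorm v) * enorm v)); last first.
    by rewrite expr2; ring.
  rewrite ler_wpM2l ?enorm_ge0 //; apply: le_trans (enorm_mulmx_le _ _) _.
  rewrite ler_wpM2r ?enorm_ge0 //; apply: le_trans (hess_lip _ _) _.
  by rewrite addrC addKr enormZ gtr0_norm.
rewrite yE scale0r addr0 => r_grad_le.
have : enorm r * enorm r <= rho / 2 * enorm v ^+ 2 * enorm r.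
  by rewrite -expr2 enorm_sqr {2}/r !dotvBr; lra.
have [-> _|rn0] := eqVneq (enorm r) 0; first by rewrite mulr_ge0 ?divr_ge0 ?sqr_ge0.
by rewrite ler_pM2r // lt_def rn0 enorm_ge0.
Qed.

End Gradient.

Section Sums.
Variable R : realFieldType.

Lemma sqr_sum_le (I : Type) (r : seq I) (a : I -> R) :
  (\sum_(i <- r) a i) ^+ 2 <= (size r)%:R * \sum_(i <- r) a i ^+ 2.
Proof.
pose S := \sum_(i <- r) a i ^+ 2.
have pair_le i j : a i * a j <= (a i ^+ 2 + a j ^+ 2) / 2.
  by have := sqr_ge0 (a i - a j); rewrite sqrrB; lra.
rewrite expr2 mulr_suml; apply: le_trans (_ : _ <= \sum_(i <- r) \sum_(j <- r)
    (a i ^+ 2 + a j ^+ 2) / 2) _.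
  by apply: ler_sum => i _; rewrite mulr_sumr; apply: ler_sum => j _; exact: pair_le.
under eq_bigr do rewrite -mulr_suml big_split /= big_const_seq count_predT.
rewrite -mulr_suml big_split /= big_const_seq count_predT.
under eq_bigr do rewrite iter_addr_0.
by rewrite sumrMnl iter_addr_0 -/S -mulr_natl le_eqVlt; apply/orP; left; apply/eqP; field.
Qed.

Lemma affine_sqr_le_split (delta rho z a e : R) :
  0 <= delta -> 0 <= rho -> 0 <= z -> z <= a + e ->
  delta * z + rho / 2 * z ^+ 2 <= (delta * a + rho * a ^+ 2) + (delta * e + rho * e ^+ 2).
Proof.
move=> delta_ge0 rho_ge0 z_ge0 z_le.
have z_sqr_le : z ^+ 2 <= 2 * (a ^+ 2 + e ^+ 2).
  apply: le_trans (_ : _ <= (a + e) ^+ 2) _.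
    by rewrite ler_sqr ?nnegrE // (le_trans z_ge0).
  by have := sqr_ge0 (a - e); rewrite sqrrB sqrrD; lra.
have := ler_wpM2l delta_ge0 z_le; have := ler_wpM2l rho_ge0 z_sqr_le; nra.
Qed.

End Sums.

Lemma mean_le_of_sum_sqr_le (R : rcfType) (a : nat -> R) (n : nat) (A B : R) :
  (0 < n)%N -> 0 <= A -> 0 <= B -> (forall t, 0 <= a t) ->
  \sum_(0 <= t < n) a t ^+ 2 <= A ^+ 2 + n%:R * B ^+ 2 ->
  n%:R^-1 * \sum_(0 <= t < n) a t <= A / Num.sqrt n%:R + B.
Proof.
move=> n_gt0 A_ge0 B_ge0 a_ge0 sum_sqr_le.
have n_pos : 0 < n%:R :> R by rewrite ltr0n.
have sqrt_n_pos : 0 < Num.sqrt n%:R :> R by rewrite sqrtr_gt0.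
have sqrt_n_sqr : Num.sqrt n%:R ^+ 2 = n%:R :> R by rewrite sqr_sqrtr // ltW.
have sum_le : \sum_(0 <= t < n) a t <= Num.sqrt n%:R * A + n%:R * B.
  rewrite -ler_sqr ?nnegrE ?sumr_ge0 ?addr_ge0 ?mulr_ge0 ?sqrtr_ge0 //.
  apply: le_trans (sqr_sum_le _ _) _; rewrite size_iota subn0.
  apply: le_trans (ler_wpM2l (ltW n_pos) sum_sqr_le) _.
  rewrite sqrrD !exprMn sqrt_n_sqr -subr_ge0.
  rewrite [leRHS](_ : _ = Num.sqrt n%:R * A * (n%:R * B) *+ 2); last by ring.
  by rewrite mulrn_wge0 // !mulr_ge0 // ltW.
set s := Num.sqrt n%:R in sqrt_n_pos sqrt_n_sqr sum_le *.
apply: le_trans (ler_wpM2l _ sum_le) _; first by rewrite invr_ge0 ltW.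
rewrite -sqrt_n_sqr le_eqVlt; apply/orP; left; apply/eqP.
by field; rewrite gt_eqF.
Qed.

Lemma iterate_drift_le (R : realType) (d : nat) (w g : nat -> 'cV[R]_d) (c : R) n :
  0 <= c -> (forall t, w t.+1 = w t - c *: g t) ->
  enorm (w n - w 0%N) <= c * \sum_(0 <= t < n) enorm (g t).
Proof.
move=> c_ge0 wS.
rewrite -(@telescope_sumr_eq _ _ _ _ (fun t => - (c *: g t))) // => [|t _]; last first.
  by rewrite wS addrAC subrr add0r.
rewrite sumrN -scaler_sumr enormN enormZ ger0_norm // ler_wpM2l //.
exact: ler_enorm_sum.
Qed.

Section GradientStep.
Variables (R : realType) (d : nat) (f : 'cV[R]_d -> R).
Variables (G : 'cV[R]_d -> 'cV[R]_d) (mu : R).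
Hypotheses (mu_gt0 : 0 < mu) (f_grad : forall p v, is_derive p v f (dotv v (G p))).
Hypothesis G_lip : forall p q, enorm (G p - G q) <= mu * enorm (p - q).

Lemma inexact_step_le x g :
  enorm (G x) ^+ 2 <= 2 * mu * (f x - f (x - mu^-1 *: g)) + enorm (g - G x) ^+ 2.
Proof.
have := descent_lemma x (x - mu^-1 *: g) f_grad G_lip.
have -> : x - mu^-1 *: g - x = - (mu^-1 *: g) by rewrite addrC addKr.
rewrite dotvNl dotvZl enormN enormZ ger0_norm ?invr_ge0 ?(ltW mu_gt0) //.
rewrite !enorm_sqr dotvBl !dotvBr (dotvC (G x) g) => descent.
have : 2 * mu * f (x - mu^-1 *: g) <= 2 * mu * f x - 2 * dotv g (G x) + dotv g g.
  apply: le_trans (ler_wpM2l _ descent) _; first by rewrite mulr_ge0 ?ltW.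
  rewrite -enorm_sqr le_eqVlt; apply/orP; left; apply/eqP; field.
  by rewrite gt_eqF.
lra.
Qed.

Lemma sum_inexact_steps_le (w g : nat -> 'cV[R]_d) n :
  (forall t, w t.+1 = w t - mu^-1 *: g t) ->
  \sum_(0 <= t < n) enorm (G (w t)) ^+ 2
    <= 2 * mu * (f (w 0%N) - f (w n)) + \sum_(0 <= t < n) enorm (g t - G (w t)) ^+ 2.
Proof.
move=> wS; rewrite -opprB -(telescope_sumr (fun t => f (w t)) (leq0n n)).
rewrite -sumrN mulr_sumr -big_split /=; apply: ler_sum_nat => t _.
by rewrite opprB wS; exact: inexact_step_le.
Qed.

End GradientStep.

Section Surrogate.
Variables (R : realType) (d K : nat) (L : nat -> 'cV[R]_d -> R) (mu rho delta : R).
Variables (what : nat -> 'cV[R]_d) (H : nat -> 'M[R]_d).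
Hypotheses (K_ge2 : (2 <= K)%N) (rho_ge0 : 0 <= rho) (delta_ge0 : 0 <= delta).
Hypothesis L_reg : forall k, (1 <= k <= K)%N ->
  [/\ twice_differentiable (L k), smooth_const mu (L k) & hess_lipschitz rho (L k)].
Hypothesis H_approx : forall k, (1 <= k < K)%N ->
  [/\ (H k)^T = H k, opnorm (H k) <= mu & opnorm (H k - hess (L k) (what k)) <= delta].

Definition surrogate_loss (v : 'cV[R]_d) : R := \sum_(1 <= k < K)
  (L k (what k) + dotv (v - what k) (grad (L k) (what k))
   + 2^-1 * dotv (v - what k) (H k *m (v - what k))).

Definition surrogate_obj (v : 'cV[R]_d) : R := K%:R^-1 * (surrogate_loss v + L K v).

Definition avg_obj (v : 'cV[R]_d) : R := K%:R^-1 * \sum_(1 <= k < K.+1) L k v.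

Definition model_grad (k : nat) (v : 'cV[R]_d) : 'cV[R]_d :=
  grad (L k) (what k) + H k *m (v - what k).

Definition surrogate_grad (v : 'cV[R]_d) : 'cV[R]_d :=
  K%:R^-1 *: (\sum_(1 <= k < K) model_grad k v + grad (L K) v).

Definition avg_grad (v : 'cV[R]_d) : 'cV[R]_d :=
  K%:R^-1 *: \sum_(1 <= k < K.+1) grad (L k) v.

Let K_gt0 : (0 < K)%N. Proof. exact: leq_trans K_ge2. Qed.
Let K_pos : 0 < K%:R :> R. Proof. by rewrite ltr0n. Qed.
Let L_K_reg :
  [/\ twice_differentiable (L K), smooth_const mu (L K) & hess_lipschitz rho (L K)].
Proof. by apply: L_reg; rewrite K_gt0 leqnn. Qed.

Lemma is_derive_avg_obj p v : is_derive p v avg_obj (dotv v (avg_grad p)).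
Proof.
rewrite dotvZr dotv_sumr; apply: is_deriveZ.
apply: is_derive_sum_seq => k; rewrite mem_index_iota ltnS => /L_reg[[dL _] _ _].
exact: is_derive_grad.
Qed.

Lemma is_derive_surrogate_obj p v :
  is_derive p v surrogate_obj (dotv v (surrogate_grad p)).
Proof.
rewrite dotvZr dotvDr dotv_sumr; apply: is_deriveZ.
apply: is_deriveD; last by have [[dL _] _ _] := L_K_reg; exact: is_derive_grad.
apply: (is_derive_quadratic (b := \sum_(1 <= k < K) 2^-1 * dotv v (H k *m v))) => h.
rewrite /surrogate_loss /GRing.scale /= !mulr_sumr -!big_split /=.
apply: eq_big_nat => k /H_approx[symH _ _].
rewrite /model_grad (addrAC p (h *: v)).
move: (p - what k) => z.
rewrite mulmxDr -scalemxAr !dotvDl !dotvDr !dotvZl !dotvZr (dotv_sym_mulmx z v symH).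
by rewrite /GRing.scale /=; field.
Qed.

Lemma avg_grad_lipschitz p q : enorm (avg_grad p - avg_grad q) <= mu * enorm (p - q).
Proof.
rewrite -scalerBr enormZ ger0_norm ?invr_ge0 ?ler0n // ler_pdivrMl // -sumrB.
apply: le_trans (ler_enorm_sum _ _ _) _.
have -> : K%:R * (mu * enorm (p - q)) = \sum_(1 <= k < K.+1) mu * enorm (p - q).
  by rewrite sumr_const_nat subSS subn0 mulr_natl.
apply: ler_sum_nat => k; rewrite ltnS => /L_reg[_ L_smooth _].
exact: L_smooth.
Qed.

Lemma surrogate_grad_lipschitz p q :
  enorm (surrogate_grad p - surrogate_grad q) <= mu * enorm (p - q).
Proof.
rewrite -scalerBr enormZ ger0_norm ?invr_ge0 ?ler0n // ler_pdivrMl //.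
have -> : \sum_(1 <= k < K) model_grad k p + grad (L K) p
          - (\sum_(1 <= k < K) model_grad k q + grad (L K) q)
        = \sum_(1 <= k < K) H k *m (p - q) + (grad (L K) p - grad (L K) q).
  rewrite opprD addrACA -sumrB; congr (_ + _); apply: eq_bigr => k _.
  by rewrite /model_grad opprD addrACA subrr add0r -mulmxBr opprB addrA subrK.
have sum_le : enorm (\sum_(1 <= k < K) H k *m (p - q))
              <= \sum_(1 <= k < K) mu * enorm (p - q).
  apply: le_trans (ler_enorm_sum _ _ _) _; apply: ler_sum_nat => k /H_approx[_ Hk_le _].
  exact: le_trans (enorm_mulmx_le _ _) (ler_wpM2r (enorm_ge0 _) Hk_le).
have [_ L_K_smooth _] := L_K_reg.
apply: le_trans (ler_enormD _ _) _; apply: le_trans (lerD sum_le (L_K_smooth p q)) _.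
by rewrite sumr_const_nat -mulrSr subn1 prednK // mulr_natl.
Qed.

Lemma model_grad_residual_le k p : (1 <= k < K)%N ->
  enorm (model_grad k p - grad (L k) p)
    <= delta * enorm (p - what k) + rho / 2 * enorm (p - what k) ^+ 2.
Proof.
move=> k_lt; have [_ _ H_close] := H_approx k_lt.
have /L_reg[[_ dgrad] _ hess_lip] : (1 <= k <= K)%N.
  by case/andP: k_lt => -> /ltnW.
set z := p - what k; set hz := hess (L k) (what k) *m z.
have -> : model_grad k p - grad (L k) p
          = (H k - hess (L k) (what k)) *m z - (grad (L k) p - grad (L k) (what k) - hz).
  rewrite mulmxBl /model_grad -/z -/hz; move: (H k *m z) hz => a b.
  by apply/matrixP => i j; rewrite !mxE; ring.
apply: le_trans (ler_enormD _ _) _; rewrite enormN lerD //.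
  exact: le_trans (enorm_mulmx_le _ _) (ler_wpM2r (enorm_ge0 _) H_close).
exact: taylor_grad_le.
Qed.

Lemma surrogate_grad_err_le p :
  enorm (surrogate_grad p - avg_grad p)
    <= K%:R^-1 * \sum_(1 <= k < K.-1) (delta * enorm (what K.-1 - what k)
                                      + rho * enorm (what K.-1 - what k) ^+ 2)
       + (delta * enorm (p - what K.-1) + rho * enorm (p - what K.-1) ^+ 2).
Proof.
set a := fun k => enorm (what K.-1 - what k); set e := enorm (p - what K.-1).
set A := fun k => delta * a k + rho * a k ^+ 2; set E := delta * e + rho * e ^+ 2.
have errE : surrogate_grad p - avg_grad p
            = K%:R^-1 *: \sum_(1 <= k < K) (model_grad k p - grad (L k) p).
  by rewrite -scalerBr big_nat_recr //= opprD addrACA subrr addr0 sumrB.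
have term_le k : (1 <= k < K)%N -> enorm (model_grad k p - grad (L k) p) <= A k + E.
  move=> k_lt; apply: le_trans (model_grad_residual_le p k_lt) _.
  apply: affine_sqr_le_split; rewrite ?enorm_ge0 //.
  have -> : p - what k = (what K.-1 - what k) + (p - what K.-1).
    by rewrite [RHS]addrC addrA subrK.
  exact: ler_enormD.
have A_last : A K.-1 = 0 by rewrite /A /a subrr enorm0 expr0n /= !mulr0 addr0.
have K1_gt0 : (0 < K.-1)%N by rewrite -ltnS prednK.
rewrite errE enormZ ger0_norm ?invr_ge0 ?ler0n //.
apply: le_trans (ler_wpM2l _ (ler_enorm_sum _ _ _)) _; first by rewrite invr_ge0 ler0n.
apply: le_trans (ler_wpM2l _ (ler_sum_nat term_le)) _; first by rewrite invr_ge0 ler0n.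
rewrite big_split /=.
have -> : \sum_(1 <= k < K) A k = \sum_(1 <= k < K.-1) A k.
  by rewrite -{1}(prednK K_gt0) big_nat_recr //= A_last addr0.
rewrite sumr_const_nat mulrDr lerD2l -[E *+ _]mulr_natl mulrA ler_piMl //.
  by rewrite /E addr_ge0 ?mulr_ge0 ?enorm_ge0 ?sqr_ge0.
by rewrite mulrC ler_pdivrMr // mul1r ler_nat leq_subr.
Qed.

Variables (T : nat) (w : nat -> 'cV[R]_d) (Ftstar : R).
Hypotheses (mu_gt0 : 0 < mu) (w0 : w 0%N = what K.-1).
Hypothesis wS : forall t, w t.+1 = w t - mu^-1 *: grad surrogate_obj (w t).
Hypothesis Ftstar_le : forall t, (t <= T)%N -> Ftstar <= surrogate_obj (w t).

(* [beta + gamma1 sqrt T + gamma2 T] of the statement *)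
Definition grad_err_bound : R :=
  Num.sqrt 3 / K%:R * \sum_(1 <= k < K.-1)
      (delta * enorm (w 0%N - what k) + 2 * rho * enorm (w 0%N - what k) ^+ 2)
  + delta * Num.sqrt (3 / mu * (surrogate_obj (w 0%N) - Ftstar)) * Num.sqrt T%:R
  + 4 * rho / mu * (surrogate_obj (w 0%N) - Ftstar) * T%:R.

Let wS_surrogate t : w t.+1 = w t - mu^-1 *: surrogate_grad (w t).
Proof. by rewrite wS (grad_eq_of_is_derive is_derive_surrogate_obj). Qed.

Let gap_ge0 : 0 <= surrogate_obj (w 0%N) - Ftstar.
Proof. by rewrite subr_ge0 Ftstar_le. Qed.

Lemma sum_sqr_surrogate_grad_le n : (n <= T)%N ->
  \sum_(0 <= t < n) enorm (surrogate_grad (w t)) ^+ 2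
    <= 2 * mu * (surrogate_obj (w 0%N) - Ftstar).
Proof.
move=> n_le; have := sum_inexact_steps_le mu_gt0 is_derive_surrogate_obj
  surrogate_grad_lipschitz n wS_surrogate.
have -> : \sum_(0 <= t < n)
           enorm (surrogate_grad (w t) - surrogate_grad (w t)) ^+ 2 = 0.
  by rewrite big1 // => t _; rewrite subrr enorm0 expr0n.
rewrite addr0 => /le_trans; apply; apply: ler_wpM2l; first by rewrite mulr_ge0 ?ltW.
by rewrite lerD2l lerN2 Ftstar_le.
Qed.

Lemma iterate_drift_sqr_le n : (n <= T)%N ->
  enorm (w n - w 0%N) ^+ 2 <= 2 * T%:R * (surrogate_obj (w 0%N) - Ftstar) / mu.
Proof.
move=> n_le.
have mu_inv_ge0 : 0 <= mu^-1 by rewrite invr_ge0 ltW.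
have := @iterate_drift_le _ _ w _ _ n mu_inv_ge0 wS_surrogate.
rewrite -ler_sqr ?nnegrE ?enorm_ge0 ?mulr_ge0 ?sumr_ge0 //;
  last by move=> t _; exact: enorm_ge0.
move=> /le_trans; apply; rewrite exprMn.
apply: le_trans (ler_wpM2l (sqr_ge0 _) (sqr_sum_le _ _)) _.
rewrite size_iota subn0.
apply: le_trans (ler_wpM2l (sqr_ge0 _) (ler_wpM2l (ler0n _ _)
                  (sum_sqr_surrogate_grad_le n_le))) _.
apply: le_trans (ler_wpM2l (sqr_ge0 _) (ler_wpM2r _ (_ : n%:R <= T%:R))) _.
- by rewrite !mulr_ge0 // ltW.
- by rewrite ler_nat.
by rewrite le_eqVlt; apply/orP; left; apply/eqP; field; rewrite gt_eqF.
Qed.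

Lemma grad_err_le t : (t <= T)%N ->
  enorm (surrogate_grad (w t) - avg_grad (w t)) <= grad_err_bound.
Proof.
move=> t_le; apply: le_trans (surrogate_grad_err_le (w t)) _.
rewrite -w0 /grad_err_bound -addrA; apply: lerD.
  set S := \sum_(1 <= k < K.-1) _.
  have S_le : S <= \sum_(1 <= k < K.-1)
      (delta * enorm (w 0%N - what k) + 2 * rho * enorm (w 0%N - what k) ^+ 2).
    apply: ler_sum_nat => k _; rewrite lerD2l -mulrA.
    by apply: ler_peMl; [exact: mulr_ge0 rho_ge0 (sqr_ge0 _) | rewrite ler1n].
  rewrite -mulrA; apply: le_trans (ler_wpM2l _ S_le) _; first by rewrite invr_ge0.
  apply: ler_peMl; last by rewrite -[leLHS]sqrtr1 ler_sqrt // ler1n.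
  by rewrite mulr_ge0 ?invr_ge0 // sumr_ge0 // => k _;
     rewrite addr_ge0 ?mulr_ge0 ?enorm_ge0 ?sqr_ge0.
set gap := surrogate_obj _ - Ftstar; set e := enorm (w t - w 0%N).
have e_sqr_le : e ^+ 2 <= 2 * T%:R * gap / mu := iterate_drift_sqr_le t_le.
apply: lerD.
  rewrite -mulrA; apply: ler_wpM2l => //.
  rewrite -sqrtrM; last by rewrite mulr_ge0 // divr_ge0 // ltW.
  rewrite -[e](ger0_norm (enorm_ge0 _)) -sqrtr_sqr; apply: ler_wsqrtr.
  apply: le_trans e_sqr_le _; rewrite -subr_ge0.
  rewrite (_ : _ - _ = T%:R * gap / mu); first by rewrite !mulr_ge0 ?invr_ge0 // ltW.
  by field; rewrite gt_eqF.
apply: le_trans (ler_wpM2l rho_ge0 e_sqr_le) _; rewrite -subr_ge0.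
rewrite (_ : _ - _ = 2 * rho * T%:R * gap / mu).
  by rewrite !mulr_ge0 ?invr_ge0 // ltW.
by field; rewrite gt_eqF.
Qed.

Lemma sum_sqr_avg_grad_le :
  \sum_(0 <= t < T) enorm (avg_grad (w t)) ^+ 2
    <= 2 * mu * (avg_obj (w 0%N) - avg_obj (w T)) + T%:R * grad_err_bound ^+ 2.
Proof.
apply: le_trans (sum_inexact_steps_le mu_gt0 is_derive_avg_obj avg_grad_lipschitz
                   T wS_surrogate) _.
have err_ge0 : 0 <= grad_err_bound := le_trans (enorm_ge0 _) (grad_err_le (leq0n T)).
have -> : T%:R * grad_err_bound ^+ 2 = \sum_(0 <= t < T) grad_err_bound ^+ 2.
  by rewrite sumr_const_nat subn0 mulr_natl.
rewrite lerD2l; apply: ler_sum_nat => t /andP[_ t_lt].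
by rewrite ler_sqr ?nnegrE ?enorm_ge0 // grad_err_le // ltnW.
Qed.

End Surrogate.

Theorem theorem2 (R : realType) (d K T : nat)
  (L : nat -> 'cV[R]_d -> R) (mu rho delta : R)
  (what : nat -> 'cV[R]_d) (H : nat -> 'M[R]_d)
  (W : set 'cV[R]_d) (w : nat -> 'cV[R]_d) :
  (2 <= K)%N ->
  0 < mu -> 0 <= rho -> 0 <= delta ->
  (forall k, (1 <= k <= K)%N ->
     [/\ twice_differentiable (L k), smooth_const mu (L k)
       & hess_lipschitz rho (L k)]) ->
  (forall k, (1 <= k < K)%N ->
     [/\ (H k)^T = H k, opnorm (H k) <= mu
       & opnorm (H k - hess (L k) (what k)) <= delta]) ->
  let Lt := fun v : 'cV[R]_d => \sum_(1 <= k < K)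
      (L k (what k) + dotv (v - what k) (grad (L k) (what k))
       + 2^-1 * dotv (v - what k) (H k *m (v - what k))) in
  let Ft := fun v => K%:R^-1 * (Lt v + L K v) in
  let F := fun v => K%:R^-1 * \sum_(1 <= k < K.+1) L k v in
  forall Fstar Ftstar : R,
  (exists2 ws, W ws & F ws = Fstar) -> (forall v, W v -> Fstar <= F v) ->
  (exists2 ws, W ws & Ft ws = Ftstar) -> (forall v, W v -> Ftstar <= Ft v) ->
  (0 < T)%N ->
  w 0%N = what K.-1 ->
  (forall t, w t.+1 = w t - mu^-1 *: grad Ft (w t)) ->
  (forall t, (t <= T)%N -> W (w t)) ->
  let F0 := F (w 0%N) in
  let Ft0 := Ft (w 0%N) in
  let alpha := Num.sqrt (2 * mu * (F0 - Fstar)) in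
  let beta := Num.sqrt 3 / K%:R * \sum_(1 <= k < K.-1)
      (delta * enorm (w 0%N - what k) + 2 * rho * enorm (w 0%N - what k) ^+ 2) in
  let gamma1 := delta * Num.sqrt (3 / mu * (Ft0 - Ftstar)) in
  let gamma2 := 4 * rho / mu * (Ft0 - Ftstar) in
  T%:R^-1 * \sum_(1 <= t < T.+1) enorm (grad F (w t.-1))
    <= alpha / Num.sqrt T%:R + beta + gamma1 * Num.sqrt T%:R + gamma2 * T%:R.
Proof.
(* only the lower bounds [Fstar <= F] and [Ftstar <= Ft] are used, not their attainment *)
move=> K_ge2 mu_gt0 rho_ge0 delta_ge0 L_reg H_approx Lt Ft F Fstar Ftstar _ Fstar_le
  _ Ftstar_le T_gt0 w0 wS w_in_W; cbv zeta.
have Ftstar_le_iter t : (t <= T)%N -> Ftstar <= Ft (w t).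
  by move=> t_le; exact/Ftstar_le/w_in_W.
have sum_sqr_le := sum_sqr_avg_grad_le K_ge2 rho_ge0 delta_ge0 L_reg H_approx
                     mu_gt0 w0 wS Ftstar_le_iter.
have err_le := grad_err_le K_ge2 rho_ge0 delta_ge0 L_reg H_approx mu_gt0 w0 wS
                 Ftstar_le_iter (leq0n T).
rewrite big_add1 /=.
under eq_bigr do rewrite (grad_eq_of_is_derive (is_derive_avg_obj L_reg)).
apply: (le_trans (mean_le_of_sum_sqr_le (A := Num.sqrt (2 * mu * (F (w 0%N) - Fstar)))
  T_gt0 (sqrtr_ge0 _) (le_trans (enorm_ge0 _) err_le) (fun t => enorm_ge0 _) _)).
  have Fstar_le_wT := Fstar_le _ (w_in_W T (leqnn T)).
  apply: le_trans sum_sqr_le _; rewrite lerD2r sqr_sqrtr; last first.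
    apply: mulr_ge0; first by rewrite mulr_ge0 // ltW.
    by rewrite subr_ge0; exact/Fstar_le/w_in_W.
  by apply: ler_wpM2l; [rewrite mulr_ge0 // ltW | rewrite lerD2l lerN2].
by rewrite !addrA.
Qed.
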